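(* Let $\rho:\mathbb{Z}_{\ge 0}\to[0,1]$ be a mapping probability with $\rho(i)=o(1/i)$ as $i\to\infty$, and let $\sigma>0$. Suppose that $m=m(|S|)$ is such that, for a random set $S$ of source symbols, with probability $\sigma$ there exist at least $|S|$ non-empty coded symbols among the first $m$ coded symbols (indices $0,1,\dots,m-1$). Then $m=\omega(|S|)$, i.e., for every $\eta>0$ there exists $|S|_0$ such that $m>\eta|S|$ whenever $|S|>|S|_0$.
   Context: Model: a set $S$ of source symbols is encoded into an infinite sequence of coded symbols indexed by $i=0,1,2,\dots$. Each source symbol is mapped to the $i$-th coded symbol with probability $\rho(i)$ (the mapping probability), independently across source symbols and across indices. A coded symbol is non-empty if at least one source symbol is mapped to it. *)

From mathcomp Require Import all_boot all_order all_algebra.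
From mathcomp Require Import reals.
Set Implicit Arguments. Unset Strict Implicit. Unset Printing Implicit Defensive.
Import Order.TTheory GRing.Theory Num.Theory.
Local Open Scope ring_scope.

(* An outcome of the random mapping of n source symbols onto the first m coded
   symbols: X (s, i) = true iff source symbol s is mapped to coded symbol i. *)
Definition mapping_outcome (n m : nat) := {ffun 'I_n * 'I_m -> bool}.

Definition nonempty_coded (n m : nat) (X : mapping_outcome n m) : {set 'I_m} :=
  [set i : 'I_m | [exists s : 'I_n, X (s, i)]].

Definition outcome_prob (R : realType) (rho : nat -> R) (n m : nat)
    (X : mapping_outcome n m) : R :=
  \prod_(p : 'I_n * 'I_m) (if X p then rho p.2 else 1 - rho p.2).

Definition prob_enough_nonempty (R : realType) (rho : nat -> R) (n m : nat) : R :=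
  \sum_(X : mapping_outcome n m | (n <= #|nonempty_coded X|)%N)
     outcome_prob rho X.

Definition little_o_inv (R : realType) (rho : nat -> R) : Prop :=
  forall eps : R, 0 < eps -> exists N : nat, forall i : nat,
    (N <= i)%N -> i%:R * rho i <= eps.

(** If at least [n] of the first [m] coded symbols are non-empty, then at most
    [k = n/2] of them have index below [k], so at least [n - k] source-symbol
    mappings land at indices [i >= k].  By Markov's inequality this happens
    with probability at most [n * \sum_(k <= i < m) rho i / (n - k)], and
    [i * rho i <= eps] for large [i] bounds the sum by [m * eps / k].  A
    positive probability [sigma] thus forces [sigma * (n - k) * k <= n * m * eps],
    i.e. [m >= sigma * n / (4 * eps)] up to lower-order terms, and [eps] is
    arbitrary. *)

From mathcomp Require Import all_boot all_order all_algebra.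
From mathcomp Require Import reals.
From mathcomp Require Import zify ring lra.

Set Implicit Arguments.
Unset Strict Implicit.
Unset Printing Implicit Defensive.
Import Order.TTheory GRing.Theory Num.Theory.
Local Open Scope ring_scope.

Lemma markov_sum (R : numDomainType) (I : finType) (P : pred I) (w f : I -> R)
    (a : R) :
  (forall i, 0 <= w i) -> (forall i, 0 <= f i) -> (forall i, P i -> a <= f i) ->
  a * \sum_(i | P i) w i <= \sum_i w i * f i.
Proof.
move=> w_ge0 f_ge0 a_le_f; rewrite mulr_sumr.
apply: le_trans (_ : \sum_(i | P i) w i * f i <= _).
  by apply: ler_sum => i Pi; rewrite mulrC ler_wpM2l ?a_le_f.
rewrite [leRHS](bigID P) /= lerDl.
by apply: sumr_ge0 => i _; rewrite mulr_ge0.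
Qed.

Lemma card_ord_lt (m k : nat) : (#|[set i : 'I_m | (i < k)%N]| <= k)%N.
Proof.
rewrite cardE -(size_map val) -[k in (_ <= k)%N](size_iota 0).
apply: uniq_leq_size; first by rewrite (map_inj_uniq val_inj) enum_uniq.
by move=> _ /mapP[i + ->]; rewrite mem_enum inE mem_iota.
Qed.

Section MappingOutcomes.

Variables n m : nat.

Definition tail_mappings (k : nat) (X : mapping_outcome n m) :
    {set 'I_n * 'I_m} :=
  [set p | X p && (k <= p.2)%N].

Lemma card_nonempty_coded_le k (X : mapping_outcome n m) :
  (#|nonempty_coded X| <= k + #|tail_mappings k X|)%N.
Proof.
apply: leq_trans
  (_ : #|[set i : 'I_m | (i < k)%N] :|: [set p.2 | p in tail_mappings k X]|
       <= _)%N.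
  apply/subset_leq_card/subsetP => i; rewrite !inE => /existsP[s Xsi].
  case: ltnP => //= le_ki.
  by apply/imsetP; exists (s, i); rewrite // inE Xsi le_ki.
rewrite cardsU; apply: leq_trans (leq_subr _ _) _.
exact: leq_add (card_ord_lt m k) (leq_imset_card _ _).
Qed.

Variables (R : realType) (rho : nat -> R).

Lemma outcome_prob_ge0 (X : mapping_outcome n m) :
  (forall i, 0 <= rho i <= 1) -> 0 <= outcome_prob rho X.
Proof.
move=> rho01; apply: prodr_ge0 => p _; have /andP[rho_ge0 rho_le1] := rho01 p.2.
by case: (X p); rewrite ?subr_ge0.
Qed.

Lemma expected_mapped (p0 : 'I_n * 'I_m) :
  \sum_(X : mapping_outcome n m) outcome_prob rho X * (X p0)%:R = rho p0.2.
Proof.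
pose F (p : 'I_n * 'I_m) (b : bool) : R :=
  (if b then rho p.2 else 1 - rho p.2) * (if p == p0 then (b : nat)%:R else 1).
have := @bigA_distr_bigA R 0 1 *%R +%R _ _ F.
rewrite (bigD1 p0) //= big_bool /F /= eqxx mulr1 mulr0 addr0.
rewrite big1 ?mulr1; last first.
  by move=> p p_neq0; rewrite big_bool /= (negPf p_neq0) !mulr1 addrC subrK.
move=> ->; apply: eq_bigr => X _.
rewrite /outcome_prob (bigD1 p0) //= [in RHS](bigD1 p0) //= eqxx.
rewrite -!mulrA; congr (_ * _); rewrite mulrC; congr (_ * _).
by apply: eq_bigr => p p_neq0; rewrite (negPf p_neq0) mulr1.
Qed.

Lemma expected_card_tail_mappings k :
  \sum_(X : mapping_outcome n m)
      outcome_prob rho X * #|tail_mappings k X|%:R =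
  \sum_(p : 'I_n * 'I_m | (k <= p.2)%N) rho p.2.
Proof.
have card_tail X : #|tail_mappings k X|%:R =
    \sum_(p : 'I_n * 'I_m | (k <= p.2)%N) (X p)%:R :> R.
  rewrite -sum1_card natr_sum big_mkcond [RHS]big_mkcond /=.
  by apply: eq_bigr => p _; rewrite inE; case: (X p); case: (k <= p.2)%N.
under eq_bigr => X _ do rewrite card_tail mulr_sumr.
by rewrite exchange_big /=; apply: eq_bigr => p _; apply: expected_mapped.
Qed.

Lemma prob_enough_nonempty_le k :
  (forall i, 0 <= rho i <= 1) ->
  (n - k)%:R * prob_enough_nonempty rho n m <=
  \sum_(p : 'I_n * 'I_m | (k <= p.2)%N) rho p.2.
Proof.
move=> rho01; rewrite -expected_card_tail_mappings.
apply: markov_sum => [X|X|X enough]; first exact: outcome_prob_ge0.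
  exact: ler0n.
by rewrite ler_nat; have := card_nonempty_coded_le k X; lia.
Qed.

Lemma tail_rho_sum_le k (eps : R) :
  (forall i, 0 <= rho i) -> 0 <= eps ->
  (forall i : nat, (k <= i)%N -> i%:R * rho i <= eps) ->
  k%:R * \sum_(p : 'I_n * 'I_m | (k <= p.2)%N) rho p.2 <= (n * m)%:R * eps.
Proof.
move=> rho_ge0 eps_ge0 rho_small; rewrite mulr_sumr.
apply: le_trans (_ : \sum_(p : 'I_n * 'I_m) eps <= _); last first.
  by rewrite sumr_const card_prod !card_ord mulr_natl.
rewrite [leRHS](bigID (fun p : 'I_n * 'I_m => (k <= p.2)%N)) /=.
rewrite ler_wpDr ?sumr_ge0 //; apply: ler_sum => p le_kp.
by apply: le_trans (rho_small _ le_kp); rewrite ler_wpM2r ?ler_nat.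
Qed.

End MappingOutcomes.

Lemma sqr_lt_8_half_mul (n : nat) :
  (2 <= n)%N -> (n ^ 2 < 8 * (n - n %/ 2) * (n %/ 2))%N.
Proof. by move=> n_ge2; nia. Qed.

Theorem lemma4p2 (R : realType) (rho : nat -> R) (sigma : R) (m : nat -> nat) :
  (forall i, 0 <= rho i <= 1) ->
  little_o_inv rho ->
  0 < sigma ->
  (forall n : nat, sigma <= prob_enough_nonempty rho n (m n)) ->
  forall eta : R, 0 < eta -> exists n0 : nat, forall n : nat,
    (n0 < n)%N -> eta * n%:R < (m n)%:R.
Proof.
move=> rho01 rho_o sigma_gt0 enough eta eta_gt0.
(* Chosen so that [m <= eta * n] gives [n * m * eps <= sigma * n^2 / 8 < sigma * (n - k) * k]. *)
pose eps := sigma / (8 * eta).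
have eps_gt0 : 0 < eps by rewrite divr_gt0 ?mulr_gt0.
have [N rho_small] := rho_o eps eps_gt0.
exists (2 * N + 1)%N => n lt_n0n; rewrite ltNge; apply/negP => m_small.
pose k := (n %/ 2)%N.
have rho_ge0 i : 0 <= rho i by case/andP: (rho01 i).
have tail : k%:R * ((n - k)%:R * sigma) <= (n * m n)%:R * eps.
  apply: le_trans
    (tail_rho_sum_le n (m n) (k := k) rho_ge0 (ltW eps_gt0) _); last first.
    by move=> i le_ki; apply: rho_small; rewrite /k in le_ki; lia.
  apply: ler_wpM2l => //; apply: le_trans (prob_enough_nonempty_le n (m n) k rho01).
  exact: ler_wpM2l.
have : n%:R ^+ 2 < 8 * (n - k)%:R * k%:R :> R.
  by rewrite -natrX -!natrM ltr_nat sqr_lt_8_half_mul //; lia.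
have eta_eps : eta * eps = sigma / 8 by rewrite /eps; field; rewrite gt_eqF.
have : (n * m n)%:R * eps <= n%:R ^+ 2 * (eta * eps).
  have -> : n%:R ^+ 2 * (eta * eps) = n%:R * (eta * n%:R) * eps by ring.
  by rewrite natrM ler_wpM2r ?ler_wpM2l // ltW.
rewrite eta_eps; move: tail.
set x := (n - k)%:R; set y := k%:R; set z := n%:R ^+ 2.
nra.
Qed.
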